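(* Let $p$ be a seminorm on $\mathbb{R}^d$ and let $T:\mathbb{R}^d\to\mathbb{R}^d$ be a $\gamma$-contraction mapping with respect to $p$, i.e. there is $\gamma\in[0,1)$ with $p(T(x)-T(y))\le \gamma\, p(x-y)$ for all $x,y\in\mathbb{R}^d$. Then there exists $x^*\in\mathbb{R}^d$ such that $p(T(x^* )-x^* )=0$. In addition, for any $x_0\in\mathbb{R}^d$, the sequence $\{x_k\}$ generated by $x_{k+1}=T(x_k)$ satisfies $$p(x_k-x^* )\le \gamma^k\, p(x_0-x^* )\quad\text{for all } k\ge 0.$$
   Context: A seminorm on $\mathbb{R}^d$ is a function $p:\mathbb{R}^d\to[0,\infty)$ with $p(\alpha x)=|\alpha|p(x)$ and $p(x+y)\le p(x)+p(y)$ for all $x,y\in\mathbb{R}^d$, $\alpha\in\mathbb{R}$ (it need not satisfy $p(x)=0\Rightarrow x=0$). *)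

From mathcomp Require Import all_boot all_order all_algebra.
From mathcomp Require Import reals.
Set Implicit Arguments. Unset Strict Implicit. Unset Printing Implicit Defensive.
Import Order.TTheory GRing.Theory Num.Theory.
Local Open Scope ring_scope.

Definition seminorm (R : realType) (d : nat) (p : 'rV[R]_d -> R) : Prop :=
  [/\ forall x, 0 <= p x,
      forall (a : R) x, p (a *: x) = `|a| * p x
    & forall x y, p (x + y) <= p x + p y].

Definition contraction_wrt (R : realType) (d : nat) (p : 'rV[R]_d -> R)
    (gamma : R) (T : 'rV[R]_d -> 'rV[R]_d) : Prop :=
  0 <= gamma /\ gamma < 1 /\ forall x y, p (T x - T y) <= gamma * p (x - y).

From mathcomp Require Import all_boot all_order all_algebra.
From mathcomp Require Import boolp classical_sets reals ring lra.
Set Implicit Arguments. Unset Strict Implicit. Unset Printing Implicit Defensive.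
Import Order.TTheory GRing.Theory Num.Theory.
Local Open Scope ring_scope.

(* Starting anywhere, the iterates of T have consecutive p-distances decaying
   like gamma ^+ n, so the point is that such a sequence has a p-limit although
   p may vanish on a whole subspace. This holds in every subspace U, by
   induction on a basis: when a line <[v]> is added to U, either v stays at
   p-distance at least eps > 0 from U, and then the coordinates along v form a
   real Cauchy sequence, or v is at p-distance 0 from U; that distance is then
   attained, by completeness of U, at some z, and replacing v by z changes
   nothing up to p-distance 0. At a p-limit xs the contraction forces
   p (T xs - xs) = 0, and the rate follows by induction on k. *)

Section Geometric.
Variable R : realType.

Lemma expr_mul1Dn_le1 (r : R) n :
  0 <= r <= 1 -> r ^+ n * (1 + n%:R * (1 - r)) <= 1.
Proof.
move=> /andP[r_ge0 r_le1].
elim: n => [|n IHn]; first by rewrite mul0r addr0 mulr1.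
have rn_le1 : r ^+ n.+1 <= 1 by rewrite exprn_ile1.
have -> : r ^+ n.+1 * (1 + n.+1%:R * (1 - r))
          = r * (r ^+ n * (1 + n%:R * (1 - r))) + r ^+ n.+1 * (1 - r).
  by rewrite exprS -natr1; ring.
have : r * (r ^+ n * (1 + n%:R * (1 - r))) <= r by rewrite ler_piMr.
have : r ^+ n.+1 * (1 - r) <= 1 - r by rewrite ler_piMl ?subr_ge0.
lra.
Qed.

Lemma geometric_bound_eq0 (c D r : R) : 0 <= c -> 0 <= r < 1 ->
  (forall n, c <= D * r ^+ n) -> c = 0.
Proof.
move=> c_ge0 /andP[r_ge0 r_lt1] c_le; apply/eqP; rewrite eq_le c_ge0 andbT leNgt.
apply/negP => c_gt0.
have h_gt0 : 0 < c * (1 - r) by rewrite mulr_gt0 // subr_gt0.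
have D_ge0 : 0 <= D by have := c_le 0%N; rewrite expr0 mulr1; apply: le_trans.
pose n := Num.Def.archi_bound (D / (c * (1 - r))).
have : D < n%:R * (c * (1 - r)).
  by rewrite -ltr_pdivrMr // archi_boundP // divr_ge0 // ltW.
have : c + n%:R * (c * (1 - r)) <= D.
  rewrite (_ : _ + _ = c * (1 + n%:R * (1 - r))); last by ring.
  have decay : r ^+ n * (1 + n%:R * (1 - r)) <= 1.
    by apply: expr_mul1Dn_le1; rewrite r_ge0 ltW.
  apply: le_trans (_ : D * r ^+ n * (1 + n%:R * (1 - r)) <= D); last first.
    by rewrite -mulrA; apply: ler_piMr.
  by rewrite ler_pM2r ?c_le // ltr_wpDr // mulr_ge0 ?subr_ge0 ?ltW.
lra.
Qed.

Lemma geometric_cauchy_real (a : nat -> R) (C r : R) : 0 <= C -> 0 <= r < 1 ->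
  (forall n, `|a n.+1 - a n| <= C * r ^+ n) ->
  exists L K, forall n, `|a n - L| <= K * r ^+ n.
Proof.
move=> C_ge0 /andP[r_ge0 r_lt1] step.
have r1_gt0 : 0 < 1 - r by rewrite subr_gt0.
pose K := C / (1 - r).
have K_ge0 : 0 <= K by rewrite divr_ge0 // ltW.
have Kr_ge0 n : 0 <= K * r ^+ n by rewrite mulr_ge0 ?exprn_ge0.
have tail n k : `|a (n + k)%N - a n| <= K * (r ^+ n - r ^+ (n + k)).
  elim: k => [|k IHk]; first by rewrite addn0 !subrr normr0 mulr0.
  rewrite addnS; apply: le_trans (ler_distD (a (n + k)%N) _ _) _.
  have -> : K * (r ^+ n - r ^+ (n + k).+1)
            = C * r ^+ (n + k) + K * (r ^+ n - r ^+ (n + k)).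
    by rewrite /K exprS; field; rewrite gt_eqF.
  exact: lerD.
have nested m n : a m - K * r ^+ m <= a n + K * r ^+ n.
  have [mn|nm] := leqP m n.
    have := tail m (n - m)%N; rewrite subnKC // ler_norml => /andP[].
    by have := Kr_ge0 n; lra.
  have := tail n (m - n)%N; rewrite subnKC ?(ltnW nm) // ler_norml => /andP[].
  by have := Kr_ge0 m; lra.
pose E := range (fun m => a m - K * r ^+ m).
have E_ub n : ubound E (a n + K * r ^+ n) by move=> _ [m _ <-]; apply: nested.
exists (sup E), K => n; rewrite ler_norml.
have : a n - K * r ^+ n <= sup E.
  by apply: ub_le_sup; [exists (a 0%N + K * r ^+ 0) | exists n].
have : sup E <= a n + K * r ^+ n.
  by apply: ge_sup; [exists (a 0%N - K * r ^+ 0); exists 0%N | ].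
by move=> *; apply/andP; split; lra.
Qed.

End Geometric.

Section Seminorm.
Variables (R : realType) (V : lmodType R) (p : V -> R).
Hypothesis seminorm_ge0 : forall x, 0 <= p x.
Hypothesis seminormZ : forall (a : R) x, p (a *: x) = `|a| * p x.
Hypothesis seminormD : forall x y, p (x + y) <= p x + p y.

Lemma seminorm0 : p 0 = 0.
Proof. by rewrite -(scale0r (0 : V)) seminormZ normr0 mul0r. Qed.

Lemma seminormN x : p (- x) = p x.
Proof. by rewrite -scaleN1r seminormZ normrN normr1 mul1r. Qed.

Lemma seminorm_distC x y : p (x - y) = p (y - x).
Proof. by rewrite -seminormN opprB. Qed.

Lemma seminorm_distD x y z : p (x - z) <= p (x - y) + p (y - z).
Proof. by have := seminormD (x - y) (y - z); rewrite addrA subrK. Qed.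

Lemma seminorm_dist_eq0 x y z : p (x - y) = 0 -> p (x - z) = p (y - z).
Proof.
move=> pxy0; have := seminorm_distD x y z; have := seminorm_distD y x z.
rewrite (seminorm_distC y x) pxy0 !add0r => le_yx le_xy.
by apply/eqP; rewrite eq_le le_xy le_yx.
Qed.

Section Contraction.
Variables (T : V -> V) (gamma : R).
Hypothesis gamma_ge0 : 0 <= gamma.
Hypothesis T_contraction : forall x y, p (T x - T y) <= gamma * p (x - y).

Lemma contraction_iter_dist n x :
  p (iter n.+1 T x - iter n T x) <= gamma ^+ n * p (T x - x).
Proof.
elim: n => [|n IHn]; first by rewrite expr0 mul1r.
apply: le_trans (T_contraction _ _) _.
by rewrite exprS -mulrA ler_wpM2l.
Qed.

Lemma contraction_iter_rate xs x0 k : p (T xs - xs) = 0 ->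
  p (iter k T x0 - xs) <= gamma ^+ k * p (x0 - xs).
Proof.
move=> Txs0; elim: k => [|k IHk]; first by rewrite expr0 mul1r.
rewrite iterS seminorm_distC -(seminorm_dist_eq0 _ Txs0) seminorm_distC.
apply: le_trans (T_contraction _ _) _.
by rewrite exprS -mulrA ler_wpM2l.
Qed.

Lemma contraction_fixed_of_rate xs x0 D : gamma < 1 ->
  (forall n, p (iter n T x0 - xs) <= D * gamma ^+ n) -> p (T xs - xs) = 0.
Proof.
move=> gamma_lt1 rate.
apply: (@geometric_bound_eq0 _ _ (gamma * D + D * gamma) gamma) => //.
  by rewrite gamma_ge0.
move=> n; apply: le_trans (seminorm_distD _ (iter n.+1 T x0) _) _.
rewrite mulrDl -!mulrA -exprS; apply: lerD; last exact: rate.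
rewrite seminorm_distC; apply: le_trans (T_contraction _ _) _.
exact: (ler_wpM2l gamma_ge0 (rate n)).
Qed.

End Contraction.
End Seminorm.

Section FiniteDimensional.
Variables (R : realType) (V : vectType R) (p : V -> R).
Hypothesis seminorm_ge0 : forall x, 0 <= p x.
Hypothesis seminormZ : forall (a : R) x, p (a *: x) = `|a| * p x.
Hypothesis seminormD : forall x y, p (x + y) <= p x + p y.

(* Only sequences with geometrically decaying steps are considered: this is all
   the contraction argument needs, and the rate survives the induction on a
   basis. *)
Definition geometrically_complete (U : {vspace V}) : Prop :=
  forall (x : nat -> V) (C r : R), 0 <= C -> 0 <= r < 1 ->
  (forall n, x n \in U) -> (forall n, p (x n.+1 - x n) <= C * r ^+ n) ->
  exists2 y, y \in U & exists D, forall n, p (x n - y) <= D * r ^+ n.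

Lemma geometrically_complete0 : geometrically_complete 0.
Proof.
move=> x C r _ _ x0 _; exists 0; first exact: mem0v.
exists 0 => n; move: (x0 n); rewrite memv0 => /eqP->.
by rewrite subrr (seminorm0 seminormZ) mul0r.
Qed.

Lemma memv_add_line_seq (U : {vspace V}) v (x : nat -> V) :
  (forall n, x n \in (<[v]> + U)%VS) ->
  exists a : nat -> R, exists2 w : nat -> V,
    (forall n, w n \in U) & forall n, x n = a n *: v + w n.
Proof.
move=> xUv.
have /choice[aw awP] n : exists aw : R * V, aw.2 \in U /\ x n = aw.1 *: v + aw.2.
  by have /memv_addP[_ /vlineP[k ->] [w wU ->]] := xUv n; exists (k, w).
by exists (fun n => (aw n).1), (fun n => (aw n).2) => n; case: (awP n).
Qed.

Lemma geometrically_complete_addv_sep (U : {vspace V}) v (eps : R) : 0 < eps ->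
  (forall z, z \in U -> eps <= p (v - z)) ->
  geometrically_complete U -> geometrically_complete (<[v]> + U)%VS.
Proof.
move=> eps_gt0 sep completeU x C r C_ge0 r01 xUv step.
have [a [w wU xE]] := memv_add_line_seq xUv.
have xB n m : x n - x m = (a n - a m) *: v + (w n - w m).
  by rewrite !xE opprD addrACA -scalerBl.
have coef_bound b z : z \in U -> `|b| * eps <= p (b *: v + z).
  move=> zU; have [->|b_neq0] := eqVneq b 0; first by rewrite normr0 mul0r.
  have -> : b *: v + z = b *: (v - (- b^-1) *: z).
    by rewrite scaleNr opprK scalerDr scalerA divff // scale1r.
  by rewrite seminormZ ler_pM2l ?normr_gt0 // sep // memvZ.
have a_step n : `|a n.+1 - a n| <= C / eps * r ^+ n.
  rewrite mulrAC ler_pdivlMr // (le_trans _ (step n)) // xB.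
  exact/coef_bound/memvB.
have Ceps_ge0 : 0 <= C / eps by rewrite divr_ge0 // ltW.
have [L [K aL]] := geometric_cauchy_real Ceps_ge0 r01 a_step.
have w_step n : p (w n.+1 - w n) <= (C + C / eps * p v) * r ^+ n.
  have -> : w n.+1 - w n = (x n.+1 - x n) + (- (a n.+1 - a n)) *: v.
    by rewrite xB scaleNr addrAC subrr add0r.
  apply: le_trans (seminormD _ _) _; rewrite seminormZ normrN mulrDl mulrAC.
  by rewrite lerD // ler_wpM2r.
have C'_ge0 : 0 <= C + C / eps * p v by rewrite addr_ge0 // mulr_ge0.
have [y yU [D wy]] := completeU w _ r C'_ge0 r01 wU w_step.
exists (L *: v + y); first by rewrite memv_add // memvZ // memv_line.
exists (K * p v + D) => n.
rewrite xE opprD addrACA -scalerBl mulrDl.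
apply: le_trans (seminormD _ _) _; rewrite seminormZ mulrAC.
by rewrite lerD // ler_wpM2r.
Qed.

Lemma geometrically_complete_addv_dist0 (U : {vspace V}) v z :
  z \in U -> p (v - z) = 0 ->
  geometrically_complete U -> geometrically_complete (<[v]> + U)%VS.
Proof.
move=> zU pvz0 completeU x C r C_ge0 r01 xUv step.
have [a [w wU xE]] := memv_add_line_seq xUv.
pose x' n := a n *: z + w n.
have x'U n : x' n \in U by rewrite memvD // memvZ.
have xx'0 n : p (x n - x' n) = 0.
  by rewrite xE opprD addrACA subrr addr0 -scalerBr seminormZ pvz0 mulr0.
have xx' n y : p (x n - y) = p (x' n - y).
  by rewrite (seminorm_dist_eq0 seminormZ seminormD y (xx'0 n)).
have x'_step n : p (x' n.+1 - x' n) <= C * r ^+ n.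
  by rewrite -xx' (seminorm_distC seminormZ) -xx' (seminorm_distC seminormZ).
have [y yU [D x'y]] := completeU x' C r C_ge0 r01 x'U x'_step.
exists y; first by rewrite -[y]add0r memv_add ?mem0v.
by exists D => n; rewrite xx'.
Qed.

Lemma geometrically_complete_dist0 (U : {vspace V}) v :
  geometrically_complete U ->
  (forall eps, 0 < eps -> exists2 z, z \in U & p (v - z) < eps) ->
  exists2 z, z \in U & p (v - z) = 0.
Proof.
move=> completeU approx.
have half01 : 0 <= (2^-1 : R) < 1 by apply/andP; split; lra.
have /choice[g gP] n : exists g, g \in U /\ p (v - g) < 2^-1 ^+ n.
  have [|g gU gv] := approx (2^-1 ^+ n); last by exists g.
  by rewrite exprn_gt0 // invr_gt0.
have g_step n : p (g n.+1 - g n) <= 2 * 2^-1 ^+ n.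
  apply: le_trans (seminorm_distD seminormD _ v _) _.
  rewrite (seminorm_distC seminormZ).
  have [_ gv] := gP n; have [_] := gP n.+1; rewrite exprS.
  have : 0 <= (2^-1 : R) ^+ n by rewrite exprn_ge0 // invr_ge0.
  lra.
have gU n : g n \in U by case: (gP n).
have [z zU [D gz]] := completeU g 2 _ (ler0n _ 2) half01 gU g_step.
exists z => //; apply: (@geometric_bound_eq0 _ _ (1 + D) 2^-1) => // n.
apply: le_trans (seminorm_distD seminormD _ (g n) _) _.
by have [_ gv] := gP n; have := gz n; lra.
Qed.

Lemma geometrically_complete_addv (U : {vspace V}) v :
  geometrically_complete U -> geometrically_complete (<[v]> + U)%VS.
Proof.
move=> completeU.
have [[eps [eps_gt0 sep]]|no_sep] :=
  EM (exists eps, 0 < eps /\ forall z, z \in U -> eps <= p (v - z)).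
  exact: geometrically_complete_addv_sep eps_gt0 sep completeU.
have [|z zU pvz0] := geometrically_complete_dist0 (v := v) completeU.
  move=> eps eps_gt0; apply: contrapT => far; apply: no_sep; exists eps.
  by split=> // z zU; rewrite leNgt; apply/negP => lt; apply: far; exists z.
exact: geometrically_complete_addv_dist0 zU pvz0 completeU.
Qed.

Lemma geometrically_complete_vspace U : geometrically_complete U.
Proof.
rewrite -(span_basis (vbasisP U)); elim: (vbasis U : seq V) => [|v s IHs].
  by rewrite span_nil; apply: geometrically_complete0.
by rewrite span_cons; apply: geometrically_complete_addv.
Qed.

End FiniteDimensional.

Theorem theorem1 (R : realType) (d : nat) (p : 'rV[R]_d -> R)
    (T : 'rV[R]_d -> 'rV[R]_d) (gamma : R) :
  seminorm p -> contraction_wrt p gamma T ->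
  exists xs : 'rV[R]_d,
    p (T xs - xs) = 0 /\
    forall (x0 : 'rV[R]_d) (k : nat),
      p (iter k T x0 - xs) <= gamma ^+ k * p (x0 - xs).
Proof.
move=> [p_ge0 pZ pD] [gamma_ge0 [gamma_lt1 T_contraction]].
have gamma01 : 0 <= gamma < 1 by rewrite gamma_ge0.
have step n : p (iter n.+1 T 0 - iter n T 0) <= p (T 0 - 0) * gamma ^+ n.
  by rewrite mulrC; apply: contraction_iter_dist.
have [xs _ [D rate]] := geometrically_complete_vspace p_ge0 pZ pD (U := fullv)
  (p_ge0 _) gamma01 (fun n => memvf _) step.
have Txs0 :=
  contraction_fixed_of_rate p_ge0 pZ pD gamma_ge0 T_contraction gamma_lt1 rate.
by exists xs; split=> // x0 k; apply: contraction_iter_rate.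
Qed.
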